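(* Let Assumptions (A1), (A2) and (A3) from the context hold, and consider the event-triggered robust dynamic average consensus scheme described in the context, with the dynamic triggering law. Then no agent exhibits Zeno behavior. That is, for every agent $i$ there is no finite $T_0$ with $\lim_{k\to\infty}t^i_k=T_0$, so agent $i$ triggers only finitely many events in any bounded time interval.
   Context: There are $n$ agents over a connected undirected graph. Each undirected edge is regarded as two directed edges $e_1,\dots,e_\ell$. The incidence matrix $B\in\{-1,0,1\}^{n\times\ell}$ has $b_{ij}=-1$ if $e_j$ leaves $v_i$, $1$ if it enters $v_i$, and $0$ otherwise. $\otimes$ is the Kronecker product, $(\cdot)^+$ the Moore–Penrose inverse, and $|\cdot|$, $\mathrm{sgn}$ act componentwise with $\mathrm{sgn}(0)=0$. The reference signals $\phi_i(t)\in\mathbb R^r$ are continuously differentiable, with $\boldsymbol\phi=(\phi_1^T,\dots,\phi_n^T)^T$ and $\bar\phi=\frac1n\sum_i\phi_i$. (A1) The graph is connected and undirected. (A2) There exist $\varphi,\dot\varphi<\infty$ such that $\sup_{t\ge0}\|(B^T\otimes I_r)\boldsymbol\phi(t)\|_\infty\le\varphi$ and $\sup_{t\ge0}\|(B^T\otimes I_r)\dot{\boldsymbol\phi}(t)\|_\infty\le\dot\varphi$. (A3) $\beta_i\ge(\gamma\varphi+\dot\varphi)\|B(B^TB)^+\otimes I_r\|_\infty$ for all $i$, where $\gamma>0$. Scheme: $\dot{\mathbf z}=-\gamma\mathbf z-\mathbf w$ and $\mathbf x=\mathbf z+\boldsymbol\phi$, with arbitrary $\mathbf z(t_0)$. The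 input is $\mathbf w=(w_1^T,\dots,w_n^T)^T=(B\otimes I_r)\widehat K\,\mathrm{sgn}\{(B^T\otimes I_r)\hat{\mathbf x}\}$, where $\widehat K$ is diagonal with positive initial entries (equal on the two directed copies of each undirected edge), updated by $\dot{\hat\kappa}_j=|\hat\xi_j|$ with $\hat{\boldsymbol\xi}=(B^T\otimes I_r)\hat{\mathbf x}$. The broadcast state is $\hat x_i(t)=x_i(t^i_{k_i(t)})$ with $t^i_{k_i(t)}=\max\{t^i_k\le t\}$, and $\varepsilon_i=x_i-\hat x_i$. The internal variable satisfies $\dot\eta_i=-\alpha_i\eta_i-\delta_i(\beta_i\mathbf 1_r^T|\varepsilon_i|-w_i^T\varepsilon_i)$ with $\eta_i(t_0)>0$, $\alpha_i>0$, $\delta_i\ge1$. Triggering: $t^i_1=t_0$ and $t^i_{k+1}=\min\{t>t^i_k:\theta_i(\beta_i\mathbf 1_r^T|\varepsilon_i(t)|-w_i(t)^T\varepsilon_i(t))\ge\eta_i(t)\}$ with $\theta_i\in(0,1)$. *)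

From Stdlib Require Import Reals Lra Lia Arith Relations.
Open Scope R_scope.

Fixpoint fsum (n : nat) (f : nat -> R) : R :=
  match n with O => 0 | S m => fsum m f + f m end.

(* maximum of nonnegative values over {0,...,n-1} (0 if n = 0) *)
Fixpoint fmax (n : nat) (f : nat -> R) : R :=
  match n with O => 0 | S m => Rmax (fmax m f) (f m) end.

Definition sgn (x : R) : R :=
  if Rlt_dec 0 x then 1 else if Rlt_dec x 0 then -1 else 0.

Definition mat := nat -> nat -> R.
Definition mmul (q : nat) (A B : mat) : mat :=
  fun a b => fsum q (fun c => A a c * B c b).
Definition mtr (A : mat) : mat := fun a b => A b a.

Definition is_pinv (m : nat) (A X : mat) : Prop :=
  forall a b, (a < m)%nat -> (b < m)%nat ->
    mmul m (mmul m A X) A a b = A a b /\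
    mmul m (mmul m X A) X a b = X a b /\
    mtr (mmul m A X) a b = mmul m A X a b /\
    mtr (mmul m X A) a b = mmul m X A a b.

(* Kronecker product M (x) I_r, with row/column index p <-> (p / r, p mod r) *)
Definition kronI (r : nat) (M : mat) : mat :=
  fun a b => M (a / r)%nat (b / r)%nat *
             (if Nat.eq_dec (a mod r) (b mod r) then 1 else 0).

Definition mat_inf_norm (p q : nat) (M : mat) : R :=
  fmax p (fun a => fsum q (fun b => Rabs (M a b))).

(* n agents 0..n-1, l directed edges 0..l-1, edge j goes from src j to dst j.
   Undirected simple graph, each undirected edge regarded as two directed edges. *)
Definition undirected_graph (n l : nat) (src dst : nat -> nat) : Prop :=
  (forall j, (j < l)%nat -> (src j < n)%nat /\ (dst j < n)%nat /\ src j <> dst j) /\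
  (forall j j', (j < l)%nat -> (j' < l)%nat -> src j = src j' -> dst j = dst j' -> j = j') /\
  (forall j, (j < l)%nat -> exists j', (j' < l)%nat /\ src j' = dst j /\ dst j' = src j).

Definition adj (l : nat) (src dst : nat -> nat) (u v : nat) : Prop :=
  exists j, (j < l)%nat /\ src j = u /\ dst j = v.

Definition connected (n l : nat) (src dst : nat -> nat) : Prop :=
  forall u v, (u < n)%nat -> (v < n)%nat -> clos_refl_trans nat (adj l src dst) u v.

Definition incid (src dst : nat -> nat) : mat :=
  fun i j => (if Nat.eq_dec (dst j) i then 1 else 0) - (if Nat.eq_dec (src j) i then 1 else 0).

(* stacked vectors v : nat -> nat -> R, v i c = c-th component of agent/edge i *)
(* (B (x) I_r) applied to an edge vector *)
Definition B_kron (l : nat) (src dst : nat -> nat) (v : nat -> nat -> R) : nat -> nat -> R :=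
  fun i c => fsum l (fun j => incid src dst i j * v j c).
(* (B^T (x) I_r) applied to an agent vector *)
Definition BT_kron (n : nat) (src dst : nat -> nat) (v : nat -> nat -> R) : nat -> nat -> R :=
  fun j c => fsum n (fun i => incid src dst i j * v i c).

Definition is_event_time (n : nat) (tau : nat -> nat -> R) (t : R) : Prop :=
  exists i k, (i < n)%nat /\ tau i k = t.

Definition cont_on_Ico (f : R -> R) (a b : R) : Prop :=
  forall t, a <= t < b -> limit1_in f (fun s => a <= s /\ s < b) (f t) t.

(* input w = (B (x) I_r) K sgn((B^T (x) I_r) xhat), K = diag(kh) *)
Definition input_w (n l : nat) (src dst : nat -> nat)
  (kh : nat -> nat -> R -> R) (xh : nat -> nat -> R -> R) (t : R) : nat -> nat -> R :=
  B_kron l src dst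
    (fun j c => kh j c t * sgn (BT_kron n src dst (fun i c' => xh i c' t) j c)).

Definition closed_loop (n r l : nat) (src dst : nat -> nat)
  (phi : nat -> nat -> R -> R) (gamma : R) (alpha beta delta theta : nat -> R)
  (t0 T0 : R)
  (z : nat -> nat -> R -> R)
  (kh : nat -> nat -> R -> R)       (* adaptive gains kappa_hat, per (edge, component) *)
  (eta : nat -> R -> R)
  (tau : nat -> nat -> R)           (* tau i k = (k+1)-th triggering time t^i_{k+1} of agent i *)
  (xh : nat -> nat -> R -> R)
  : Prop :=
  let x := fun i c t => z i c t + phi i c t in
  let w := fun t => input_w n l src dst kh xh t in
  (forall j c, (j < l)%nat -> (c < r)%nat -> 0 < kh j c t0) /\
  (forall j j' c, (j < l)%nat -> (j' < l)%nat -> (c < r)%nat ->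
      src j' = dst j -> dst j' = src j -> kh j c t0 = kh j' c t0) /\
  (forall i, (i < n)%nat -> 0 < eta i t0) /\
  (forall i c, (i < n)%nat -> (c < r)%nat -> cont_on_Ico (z i c) t0 T0) /\
  (forall j c, (j < l)%nat -> (c < r)%nat -> cont_on_Ico (kh j c) t0 T0) /\
  (forall i, (i < n)%nat -> cont_on_Ico (eta i) t0 T0) /\
  (forall t, t0 < t < T0 -> ~ is_event_time n tau t ->
     (forall i c, (i < n)%nat -> (c < r)%nat ->
        derivable_pt_lim (z i c) t (- gamma * z i c t - w t i c)) /\
     (forall j c, (j < l)%nat -> (c < r)%nat ->
        derivable_pt_lim (kh j c) t
          (Rabs (BT_kron n src dst (fun i c' => xh i c' t) j c))) /\
     (forall i, (i < n)%nat ->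
        derivable_pt_lim (eta i) t
          (- alpha i * eta i t
           - delta i * (beta i * fsum r (fun c => Rabs (x i c t - xh i c t))
                        - fsum r (fun c => w t i c * (x i c t - xh i c t)))))) /\
  (forall i, (i < n)%nat -> tau i O = t0) /\
  (forall i k, (i < n)%nat -> tau i k < tau i (S k)) /\
  (forall i k c t, (i < n)%nat -> (c < r)%nat -> tau i k <= t < tau i (S k) -> t < T0 ->
      xh i c t = x i c (tau i k)) /\
  (* dynamic triggering rule t^i_{k+1} = min{t > t^i_k : theta_i(beta_i 1^T|eps_i| - w_i^T eps_i) >= eta_i},
     with eps_i(t) = x_i(t) - x_i(t^i_k) the measurement error before the reset:
     (a) the condition fails strictly between consecutive events, *)
  (forall i k t, (i < n)%nat -> tau i k < t < tau i (S k) -> t < T0 ->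
      theta i * (beta i * fsum r (fun c => Rabs (x i c t - x i c (tau i k)))
                 - fsum r (fun c => w t i c * (x i c t - x i c (tau i k)))) < eta i t) /\
  (* (b) and it is reached at t^i_{k+1} (as t -> t^i_{k+1} from the left) *)
  (forall i k, (i < n)%nat -> tau i (S k) < T0 ->
      forall e, 0 < e -> exists t, tau i (S k) - e < t < tau i (S k) /\
        theta i * (beta i * fsum r (fun c => Rabs (x i c t - x i c (tau i k)))
                   - fsum r (fun c => w t i c * (x i c t - x i c (tau i k))))
        > eta i t - e).

(* Suppose the events of some agent cluster at a finite time.  Among all
   agents take the earliest cluster time T and an agent j whose events
   cluster there (earliest_cluster_time); before T every agent triggers only
   finitely often on bounded intervals, so the closed loop is a classical ODE
   between isolated event times.  On [t0, T):
   - z and the adaptive gains grow at most exponentially (state_growth, by real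
     induction and a comparison principle), so they are bounded, and the
     state x = z + phi is Lipschitz (state_lipschitz);
   - the triggering rule forces eta_j' >= -(alpha_j + delta_j / theta_j) eta_j,
     so eta_j stays above some m > 0 (eta_floor).
   Just after an event of agent j close to T the triggering term is at most
   proportional to the elapsed time, hence below m / 2, while it must reach
   eta_j >= m before the next event (no_cluster_at_T). *)

From Stdlib Require Import Reals Lra Lia Psatz Classical.
Open Scope R_scope.

Lemma fsum_ext n f g : (forall k, (k < n)%nat -> f k = g k) -> fsum n f = fsum n g.
Proof.
  induction n as [|n IH]; simpl; intros H; [reflexivity|].
  rewrite IH by (intros; apply H; lia). rewrite H by lia. reflexivity.
Qed.

Lemma fsum_le n f g : (forall k, (k < n)%nat -> f k <= g k) -> fsum n f <= fsum n g.
Proof.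
  induction n as [|n IH]; simpl; intros H; [lra|].
  assert (f n <= g n) by (apply H; lia).
  assert (fsum n f <= fsum n g) by (apply IH; intros; apply H; lia).
  lra.
Qed.

Lemma fsum_abs n f : Rabs (fsum n f) <= fsum n (fun k => Rabs (f k)).
Proof.
  induction n as [|n IH]; simpl; [rewrite Rabs_R0; lra|].
  eapply Rle_trans; [apply Rabs_triang | lra].
Qed.

Lemma fsum_const n c : fsum n (fun _ => c) = INR n * c.
Proof. induction n as [|n IH]; simpl fsum; [simpl; ring | rewrite IH, S_INR; ring]. Qed.

Lemma fsum_scal n f c : fsum n (fun k => c * f k) = c * fsum n f.
Proof. induction n as [|n IH]; simpl; [ring | rewrite IH; ring]. Qed.

Lemma fsum_bound n f M :
  (forall k, (k < n)%nat -> Rabs (f k) <= M) -> Rabs (fsum n f) <= INR n * M.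
Proof.
  intros H. eapply Rle_trans; [apply fsum_abs|].
  rewrite <- fsum_const. apply fsum_le. exact H.
Qed.

Lemma fin_upper n (P : nat -> R -> Prop) :
  (forall k x y, x <= y -> P k x -> P k y) ->
  (forall k, (k < n)%nat -> exists x, P k x) ->
  exists x, forall k, (k < n)%nat -> P k x.
Proof.
  intros Hup. induction n as [|n IH]; intros H; [exists 0; intros; lia|].
  destruct IH as [x Hx]; [intros; apply H; lia|].
  destruct (H n) as [y Hy]; [lia|].
  exists (Rmax x y). intros k Hk. destruct (Nat.eq_dec k n) as [->|].
  - eapply Hup; [apply Rmax_r | exact Hy].
  - eapply Hup; [apply Rmax_l | apply Hx; lia].
Qed.

Lemma fin_lower n (P : nat -> R -> Prop) :
  (forall k x y, 0 < y <= x -> P k x -> P k y) ->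
  (forall k, (k < n)%nat -> exists x, 0 < x /\ P k x) ->
  exists x, 0 < x /\ forall k, (k < n)%nat -> P k x.
Proof.
  intros Hdown. induction n as [|n IH]; intros H; [exists 1; split; [lra | intros; lia]|].
  destruct IH as [x [Hx0 Hx]]; [intros; apply H; lia|].
  destruct (H n) as [y [Hy0 Hy]]; [lia|].
  assert (Hm : 0 < Rmin x y) by (apply Rmin_pos; assumption).
  exists (Rmin x y). split; [exact Hm|]. intros k Hk. destruct (Nat.eq_dec k n) as [->|].
  - eapply Hdown; [split; [exact Hm | apply Rmin_r] | exact Hy].
  - eapply Hdown; [split; [exact Hm | apply Rmin_l] | apply Hx; lia].
Qed.

Lemma fin_upper2 n r (P : nat -> nat -> R -> Prop) :
  (forall i c x y, x <= y -> P i c x -> P i c y) ->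
  (forall i c, (i < n)%nat -> (c < r)%nat -> exists x, P i c x) ->
  exists x, forall i c, (i < n)%nat -> (c < r)%nat -> P i c x.
Proof.
  intros Hup H.
  destruct (fin_upper n (fun i x => forall c, (c < r)%nat -> P i c x)) as [x Hx].
  - intros i x y Hxy Hx c Hc. eapply Hup; eauto.
  - intros i Hi. apply fin_upper; [intros; eapply Hup; eauto | intros; apply H; auto].
  - exists x. intros i c Hi Hc. apply Hx; assumption.
Qed.

Lemma fin_lower2 n r (P : nat -> nat -> R -> Prop) :
  (forall i c x y, 0 < y <= x -> P i c x -> P i c y) ->
  (forall i c, (i < n)%nat -> (c < r)%nat -> exists x, 0 < x /\ P i c x) ->
  exists x, 0 < x /\ forall i c, (i < n)%nat -> (c < r)%nat -> P i c x.
Proof.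
  intros Hdown H.
  destruct (fin_lower n (fun i x => forall c, (c < r)%nat -> P i c x)) as [x [Hx0 Hx]].
  - intros i x y Hxy Hx c Hc. eapply Hdown; eauto.
  - intros i Hi. apply fin_lower; [intros; eapply Hdown; eauto | intros; apply H; auto].
  - exists x. split; [exact Hx0|]. intros i c Hi Hc. apply Hx; assumption.
Qed.

Definition cont_on_Icc (f : R -> R) (a b : R) : Prop :=
  forall t, a <= t <= b -> limit1_in f (fun s => a <= s <= b) (f t) t.

Lemma cont_on_Icc_of_Ico f t0 T0 a b :
  cont_on_Ico f t0 T0 -> t0 <= a -> b < T0 -> cont_on_Icc f a b.
Proof.
  intros H Ha Hb t Ht eps He. destruct (H t ltac:(lra) eps He) as [d [Hd Hd2]].
  exists d; split; [exact Hd|]. intros s [Hs Hst]. apply Hd2. split; [simpl; lra | exact Hst].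
Qed.

Lemma cont_on_Icc_of_continuity f a b : (forall t, continuity_pt f t) -> cont_on_Icc f a b.
Proof.
  intros H t Ht eps He. destruct (H t eps He) as [d [Hd Hd2]].
  exists d; split; [exact Hd|]. intros s [Hs Hst].
  destruct (Req_dec s t) as [->|Hne].
  - simpl. unfold R_dist. rewrite Rminus_diag, Rabs_R0. exact He.
  - apply Hd2. split; [split; [exact I | congruence] | exact Hst].
Qed.

Lemma cont_on_Icc_plus f g a b :
  cont_on_Icc f a b -> cont_on_Icc g a b -> cont_on_Icc (fun u => f u + g u) a b.
Proof. intros Hf Hg t Ht. apply limit_plus; auto. Qed.

Lemma cont_on_Icc_minus f g a b :
  cont_on_Icc f a b -> cont_on_Icc g a b -> cont_on_Icc (fun u => f u - g u) a b.
Proof. intros Hf Hg t Ht. apply limit_minus; auto. Qed.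

Lemma cont_on_Icc_mult f g a b :
  cont_on_Icc f a b -> cont_on_Icc g a b -> cont_on_Icc (fun u => f u * g u) a b.
Proof. intros Hf Hg t Ht. apply limit_mul; auto. Qed.

Lemma cont_on_Icc_opp f a b : cont_on_Icc f a b -> cont_on_Icc (fun u => - f u) a b.
Proof. intros Hf t Ht. apply limit_Ropp; auto. Qed.

Lemma limit_le (f : R -> R) D s c :
  limit1_in f D (f s) s ->
  (forall e, 0 < e -> exists v, D v /\ Rabs (v - s) < e /\ f v <= c) -> f s <= c.
Proof.
  intros Hlim Hnear. apply Rnot_lt_le. intros Hlt.
  destruct (Hlim (f s - c) ltac:(lra)) as [d [Hd Hd2]].
  destruct (Hnear d Hd) as [v [Dv [Hvs Hfv]]].
  assert (Hclose := Hd2 v (conj Dv Hvs)). simpl in Hclose. unfold R_dist in Hclose.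
  apply Rabs_def2 in Hclose. lra.
Qed.

Lemma real_ind (a b : R) (P : R -> Prop) : a <= b -> P a ->
  (forall s, a < s <= b -> (forall v, a <= v < s -> P v) -> P s) ->
  (forall s, a <= s < b -> (forall v, a <= v <= s -> P v) ->
      exists d, 0 < d /\ forall v, s < v < s + d -> v <= b -> P v) ->
  forall v, a <= v <= b -> P v.
Proof.
  intros Hab Ha Hleft Hright.
  set (E := fun s => a <= s <= b /\ forall v, a <= v <= s -> P v).
  assert (Ea : E a) by (split; [lra | intros v Hv; replace v with a by lra; exact Ha]).
  destruct (completeness E) as [s [Hub Hlub]];
    [exists b; intros x [Hx _]; lra | exists a; exact Ea|].
  assert (Has : a <= s) by (apply Hub; exact Ea).
  assert (Hsb : s <= b) by (apply Hlub; intros x [Hx _]; lra).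
  assert (Hbelow : forall v, a <= v < s -> P v).
  { intros v Hv. destruct (classic (exists x, E x /\ v < x)) as [[x [[_ Hx] Hvx]]|Hno].
    - apply Hx; lra.
    - assert (s <= v); [|lra]. apply Hlub. intros x Ex.
      apply Rnot_lt_le. intros Hvx. apply Hno. exists x; split; assumption. }
  assert (Hupto : forall v, a <= v <= s -> P v).
  { intros v Hv. destruct (Req_dec v s) as [->|]; [|apply Hbelow; lra].
    destruct (Req_dec a s) as [<-|]; [exact Ha | apply Hleft; [lra | exact Hbelow]]. }
  destruct (Req_dec s b) as [<-|Hsb']; [exact Hupto|].
  destruct (Hright s ltac:(lra) Hupto) as [d [Hd Hd2]].
  set (v' := Rmin (s + d / 2) b).
  assert (s < v') by (unfold v'; apply Rmin_glb_lt; lra).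
  assert (v' <= b) by apply Rmin_r. assert (v' <= s + d / 2) by apply Rmin_l.
  assert (E v'); [|assert (v' <= s) by (apply Hub; assumption); lra].
  split; [lra|]. intros v Hv. destruct (Rle_lt_dec v s); [apply Hupto; lra | apply Hd2; lra].
Qed.

Definition right_isolated (E : R -> Prop) (a b : R) : Prop :=
  forall t, a <= t < b -> exists d, 0 < d /\ forall s, t < s < t + d -> ~ E s.

Lemma nonincreasing_off (f f' : R -> R) (a b : R) (E : R -> Prop) : a <= b ->
  cont_on_Icc f a b -> right_isolated E a b ->
  (forall s, a < s < b -> ~ E s -> derivable_pt_lim f s (f' s) /\ f' s <= 0) ->
  f b <= f a.
Proof.
  intros Hab Hc Hiso Hd.
  assert (Happroach : forall s p q, a <= p -> p < q -> q <= b -> (s = p \/ s = q) ->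
            forall e, 0 < e -> exists v, p < v < q /\ Rabs (v - s) < e).
  { intros s p q Hap Hpq Hqb Hs e He.
    assert (0 < Rmin e (q - p)) by (apply Rmin_pos; lra).
    assert (Rmin e (q - p) <= e) by apply Rmin_l. assert (Rmin e (q - p) <= q - p) by apply Rmin_r.
    destruct Hs as [->| ->].
    - exists (p + Rmin e (q - p) / 2). split; [lra | rewrite Rabs_right; lra].
    - exists (q - Rmin e (q - p) / 2). split; [lra | rewrite Rabs_left; lra]. }
  apply (real_ind a b (fun v => f v <= f a)); [lra | lra | | | lra].
  - intros s Hs Hlt. apply (limit_le f (fun u => a <= u <= b)); [apply Hc; lra|].
    intros e He. destruct (Happroach s a s ltac:(lra) ltac:(lra) ltac:(lra) (or_intror eq_refl) e He) as [v [Hv Hvs]].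
    exists v. split; [lra|]. split; [exact Hvs | apply Hlt; lra].
  - intros s Hs Hle. destruct (Hiso s Hs) as [d [Hd0 Hfree]]. exists d; split; [exact Hd0|].
    intros v Hv Hvb.
    assert (Hinner : forall p q, s < p < q -> q < v -> f q <= f p).
    { intros p q Hpq Hqv. destruct (MVT_cor2 f f' p q ltac:(lra)) as [c [Hmvt Hc']].
      - intros c Hc'. apply Hd; [lra | apply Hfree; lra].
      - assert (f' c <= 0) by (apply Hd; [lra | apply Hfree; lra]). nra. }
    assert (Hto_v : forall p, s < p < v -> f v <= f p).
    { intros p Hp. apply (limit_le f (fun u => a <= u <= b)); [apply Hc; lra|].
      intros e He. destruct (Happroach v p v ltac:(lra) ltac:(lra) ltac:(lra) (or_intror eq_refl) e He) as [q [Hq Hqv]].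
      exists q. split; [lra|]. split; [exact Hqv | apply Hinner; lra]. }
    assert (f v <= f s); [|assert (f s <= f a) by (apply Hle; lra); lra].
    assert (- f s <= - f v); [|lra].
    apply (limit_le (fun u => - f u) (fun u => a <= u <= b)); [apply limit_Ropp, Hc; lra|].
    intros e He. destruct (Happroach s s v ltac:(lra) ltac:(lra) ltac:(lra) (or_introl eq_refl) e He) as [p [Hp Hps]].
    exists p. split; [lra|]. split; [exact Hps|]. assert (f v <= f p) by (apply Hto_v; lra). lra.
Qed.

Lemma abs_comparison f f' g g' a b (E : R -> Prop) : a <= b ->
  cont_on_Icc f a b -> cont_on_Icc g a b -> right_isolated E a b ->
  (forall s, a < s < b -> ~ E s ->
     derivable_pt_lim f s (f' s) /\ derivable_pt_lim g s (g' s) /\ Rabs (f' s) <= g' s) ->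
  Rabs (f a) < g a -> Rabs (f b) < g b.
Proof.
  intros Hab Hf Hg Hiso Hd Ha. apply Rabs_def2 in Ha.
  assert (f b - g b <= f a - g a).
  { apply (nonincreasing_off (fun u => f u - g u) (fun u => f' u - g' u) a b E);
      [exact Hab | apply cont_on_Icc_minus; assumption | exact Hiso|].
    intros s Hs HE. destruct (Hd s Hs HE) as [Df [Dg Hle]].
    split; [apply (derivable_pt_lim_minus f g); assumption|].
    pose proof (Rle_abs (f' s)). lra. }
  assert (- f b - g b <= - f a - g a).
  { apply (nonincreasing_off (fun u => - f u - g u) (fun u => - f' u - g' u) a b E);
      [exact Hab | apply cont_on_Icc_minus; [apply cont_on_Icc_opp|]; assumption | exact Hiso|].
    intros s Hs HE. destruct (Hd s Hs HE) as [Df [Dg Hle]].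
    split; [apply (derivable_pt_lim_minus (- f)%F g); [apply derivable_pt_lim_opp|]; assumption|].
    pose proof (Rle_abs (- f' s)). rewrite Rabs_Ropp in *. lra. }
  apply Rabs_def1; lra.
Qed.

Lemma abs_lt_persists f g a b t :
  cont_on_Icc f a b -> cont_on_Icc g a b -> a <= t <= b -> Rabs (f t) < g t ->
  exists d, 0 < d /\ forall v, a <= v <= b -> Rabs (v - t) < d -> Rabs (f v) < g v.
Proof.
  intros Hf Hg Ht Hlt. apply Rabs_def2 in Hlt.
  assert (Hpos : forall h, limit1_in h (fun s => a <= s <= b) (h t) t -> 0 < h t ->
            exists d, 0 < d /\ forall v, a <= v <= b -> Rabs (v - t) < d -> 0 < h v).
  { intros h Hh Hht. destruct (Hh (h t) Hht) as [d [Hd Hd2]]. exists d; split; [exact Hd|].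
    intros v Hv Hvt. assert (Hc := Hd2 v (conj Hv Hvt)). simpl in Hc. unfold R_dist in Hc.
    apply Rabs_def2 in Hc. lra. }
  destruct (Hpos (fun u => g u - f u)) as [d1 [Hd1 H1]]; [apply limit_minus; auto | lra|].
  destruct (Hpos (fun u => g u + f u)) as [d2 [Hd2 H2]]; [apply limit_plus; auto | lra|].
  exists (Rmin d1 d2). split; [apply Rmin_pos; assumption|]. intros v Hv Hvt.
  assert (0 < g v - f v) by (apply H1; [exact Hv | eapply Rlt_le_trans; [exact Hvt | apply Rmin_l]]).
  assert (0 < g v + f v) by (apply H2; [exact Hv | eapply Rlt_le_trans; [exact Hvt | apply Rmin_r]]).
  apply Rabs_def1; lra.
Qed.

Lemma incr_le (u : nat -> R) :
  (forall k, u k < u (S k)) -> forall k k', (k <= k')%nat -> u k <= u k'.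
Proof. intros H k k' Hk. induction Hk as [|m _ IH]; [lra | specialize (H m); lra]. Qed.

Definition approaches_below (u : nat -> R) (L : R) : Prop :=
  (forall k, u k < L) /\ (forall eps, 0 < eps -> exists k, L - eps < u k).

Lemma approaches_below_of_cv (u : nat -> R) L :
  (forall k, u k < u (S k)) -> Un_cv u L -> approaches_below u L.
Proof.
  intros Hinc Hcv. split.
  - intros k. apply Rnot_le_lt. intros Hk.
    destruct (Hcv (u (S k) - u k)) as [N HN]; [specialize (Hinc k); lra|].
    specialize (HN (max N (S k)) ltac:(lia)). unfold Rdist in HN. apply Rabs_def2 in HN.
    assert (u (S k) <= u (max N (S k))) by (apply incr_le; [exact Hinc | lia]). lra.
  - intros eps He. destruct (Hcv eps He) as [N HN]. exists N.
    specialize (HN N (le_n N)). unfold Rdist in HN. apply Rabs_def2 in HN. lra.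
Qed.

Lemma approaches_below_sup (u : nat -> R) t :
  (forall k, u k < u (S k)) -> (forall k, u k <= t) -> exists L, L <= t /\ approaches_below u L.
Proof.
  intros Hinc Hle.
  destruct (completeness (fun x => exists k, x = u k)) as [L [Hub Hlub]];
    [exists t; intros x [k ->]; apply Hle | exists (u O), O; reflexivity|].
  exists L. split; [apply Hlub; intros x [k ->]; apply Hle|]. split.
  - intros k. apply Rlt_le_trans with (u (S k)); [apply Hinc | apply Hub; exists (S k); reflexivity].
  - intros eps He. apply NNPP. intros Hno. assert (L <= L - eps); [|lra].
    apply Hlub. intros x [k ->]. apply Rnot_lt_le. intros Hk. apply Hno. exists k; exact Hk.
Qed.

Lemma locate_in_incr (u : nat -> R) v K :
  (forall k, u k < u (S k)) -> u O <= v -> v < u K -> exists k, u k <= v < u (S k).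
Proof.
  intros Hinc. induction K as [|K IH]; intros H0 HK; [lra|].
  destruct (Rle_lt_dec (u K) v); [exists K; lra | apply IH; assumption].
Qed.

Lemma incr_right_gap (u : nat -> R) s K :
  (forall k, u k < u (S k)) -> s < u K -> exists d, 0 < d /\ forall k, ~ (s < u k < s + d).
Proof.
  intros Hinc HK. destruct (Rlt_le_dec s (u O)) as [H0|H0].
  - exists (u O - s). split; [lra|]. intros k Hk.
    assert (u O <= u k) by (apply incr_le; [exact Hinc | lia]). lra.
  - destruct (locate_in_incr u s K Hinc H0 HK) as [m [Hm1 Hm2]].
    exists (u (S m) - s). split; [lra|]. intros k Hk. destruct (Nat.le_gt_cases k m).
    + assert (u k <= u m) by (apply incr_le; assumption). lra.
    + assert (u (S m) <= u k) by (apply incr_le; [exact Hinc | lia]). lra.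
Qed.

Definition events_reach (n : nat) (tau : nat -> nat -> R) (T : R) : Prop :=
  forall j t, (j < n)%nat -> t < T -> exists k, t < tau j k.

Lemma earliest_cluster_time (n : nat) (tau : nat -> nat -> R) (T0 : R) (i : nat) :
  (i < n)%nat -> (forall j k, (j < n)%nat -> tau j k < tau j (S k)) -> Un_cv (tau i) T0 ->
  exists j T, (j < n)%nat /\ T <= T0 /\ approaches_below (tau j) T /\ events_reach n tau T.
Proof.
  intros Hi Hinc Hcv.
  assert (Hm : forall m, (m <= n)%nat -> exists j T, (j < n)%nat /\ T <= T0 /\
            approaches_below (tau j) T /\ events_reach m tau T).
  { induction m as [|m IH]; intros Hmn.
    - exists i, T0. split; [exact Hi|]. split; [lra|].
      split; [apply approaches_below_of_cv; auto | intros ? ? ?; lia].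
    - destruct (IH ltac:(lia)) as [j [T [Hj [HT [Hacc Hreach]]]]].
      destruct (classic (forall t, t < T -> exists k, t < tau m k)) as [Hy|Hno].
      + exists j, T. do 3 (split; [assumption|]). intros j' t Hj' Ht.
        destruct (Nat.eq_dec j' m) as [->|]; [apply Hy; exact Ht | apply Hreach; [lia | exact Ht]].
      + apply not_all_ex_not in Hno. destruct Hno as [t Ht].
        apply imply_to_and in Ht. destruct Ht as [Ht Hno].
        destruct (approaches_below_sup (tau m) t) as [L [HLt [Hbel Happ]]].
        { intros k; apply Hinc; lia. }
        { intros k. apply Rnot_lt_le. intros Hk. apply Hno. exists k; exact Hk. }
        exists m, L. split; [lia|]. split; [lra|]. split; [split; assumption|].
        intros j' t' Hj' Ht'. destruct (Nat.eq_dec j' m) as [->|].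
        * destruct (Happ (L - t') ltac:(lra)) as [k Hk]. exists k; lra.
        * apply Hreach; [lia | lra]. }
  apply Hm; lia.
Qed.

Lemma events_right_isolated (n : nat) (tau : nat -> nat -> R) (T a b : R) :
  (forall j k, (j < n)%nat -> tau j k < tau j (S k)) -> events_reach n tau T -> b <= T ->
  right_isolated (is_event_time n tau) a b.
Proof.
  intros Hinc Hreach HbT s Hs.
  destruct (fin_lower n (fun j d => forall k, ~ (s < tau j k < s + d))) as [d [Hd H]].
  - intros j x y Hxy Hx k Hk. apply (Hx k). lra.
  - intros j Hj. destruct (Hreach j s Hj ltac:(lra)) as [K HK].
    apply (incr_right_gap (tau j) s K); [intros; apply Hinc; exact Hj | exact HK].
  - exists d; split; [exact Hd|]. intros v Hv [j [k [Hj Hk]]]. apply (H j Hj k). lra.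
Qed.

(** Size of the control input.  Incidence entries and signs are bounded by 1,
    so w is bounded by l times the largest gain, and (B^T (x) I_r) v by n
    times the largest entry of v. *)

Lemma incid_abs src dst i j : Rabs (incid src dst i j) <= 1.
Proof.
  unfold incid. destruct (Nat.eq_dec (dst j) i), (Nat.eq_dec (src j) i); apply Rabs_le; lra.
Qed.

Lemma sgn_abs x : Rabs (sgn x) <= 1.
Proof. unfold sgn. destruct (Rlt_dec 0 x); [|destruct (Rlt_dec x 0)]; apply Rabs_le; lra. Qed.

Lemma input_w_bound n l src dst kh xh t i c K :
  (forall j, (j < l)%nat -> Rabs (kh j c t) <= K) ->
  Rabs (input_w n l src dst kh xh t i c) <= INR l * K.
Proof.
  intros H. unfold input_w, B_kron. apply fsum_bound. intros k Hk. rewrite !Rabs_mult.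
  pose proof (sgn_abs (BT_kron n src dst (fun i0 c' => xh i0 c' t) k c)) as Hs.
  set (s := sgn (BT_kron n src dst (fun i0 c' => xh i0 c' t) k c)) in *.
  pose proof (incid_abs src dst i k). pose proof (H k Hk).
  pose proof (Rabs_pos (incid src dst i k)). pose proof (Rabs_pos (kh k c t)).
  pose proof (Rabs_pos s).
  assert (Rabs (kh k c t) * Rabs s <= K) by nra. nra.
Qed.

Lemma BT_kron_bound n src dst (v : nat -> nat -> R) j c K :
  (forall i, (i < n)%nat -> Rabs (v i c) <= K) -> Rabs (BT_kron n src dst v j c) <= INR n * K.
Proof.
  intros H. unfold BT_kron. apply fsum_bound. intros k Hk. rewrite Rabs_mult.
  pose proof (incid_abs src dst k j). pose proof (H k Hk).
  pose proof (Rabs_pos (incid src dst k j)). pose proof (Rabs_pos (v k c)). nra.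
Qed.

Definition trigger_term (b : R) (r : nat) (w e : nat -> R) : R :=
  b * fsum r (fun c => Rabs (e c)) - fsum r (fun c => w c * e c).

Lemma trigger_term_bound b r (w e : nat -> R) W E :
  0 <= W -> (forall c, (c < r)%nat -> Rabs (w c) <= W /\ Rabs (e c) <= E) ->
  trigger_term b r w e <= (Rabs b + W) * (INR r * E).
Proof.
  intros HW H. unfold trigger_term.
  set (S := fsum r (fun c => Rabs (e c))).
  assert (HS0 : 0 <= S).
  { unfold S. rewrite <- (Rmult_0_r (INR r)), <- fsum_const. apply fsum_le. intros; apply Rabs_pos. }
  assert (HS1 : S <= INR r * E).
  { unfold S. rewrite <- fsum_const. apply fsum_le. intros c Hc. apply H; exact Hc. }
  assert (Hw : Rabs (fsum r (fun c => w c * e c)) <= W * S).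
  { eapply Rle_trans; [apply fsum_abs|]. unfold S. rewrite <- fsum_scal. apply fsum_le.
    intros c Hc. rewrite Rabs_mult. apply Rmult_le_compat_r; [apply Rabs_pos | apply H; exact Hc]. }
  pose proof (Rle_abs (- fsum r (fun c => w c * e c))). rewrite Rabs_Ropp in *.
  assert (b * S <= Rabs b * S) by (apply Rmult_le_compat_r; [exact HS0 | apply Rle_abs]).
  pose proof (Rabs_pos b).
  assert ((Rabs b + W) * S <= (Rabs b + W) * (INR r * E)) by (apply Rmult_le_compat_l; lra).
  lra.
Qed.

Definition growth (M A t0 u : R) : R := M * exp (A * (u - t0)).

Lemma growth_deriv M A t0 u : derivable_pt_lim (growth M A t0) u (A * growth M A t0 u).
Proof.
  unfold growth.
  assert (Hlin : derivable_pt_lim (fun u => A * (u - t0)) u A).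
  { assert (Hid : derivable_pt_lim (fun u => u - t0) u (1 - 0)).
    { apply (derivable_pt_lim_minus id (fct_cte t0));
        [apply derivable_pt_lim_id | apply derivable_pt_lim_const]. }
    assert (H := derivable_pt_lim_scal _ A u _ Hid).
    rewrite Rminus_0_r, Rmult_1_r in H. exact H. }
  assert (Hexp := derivable_pt_lim_comp _ exp u _ _ Hlin (derivable_pt_lim_exp (A * (u - t0)))).
  replace (A * (M * exp (A * (u - t0)))) with (M * (exp (A * (u - t0)) * A)) by ring.
  apply (derivable_pt_lim_scal (fun u => exp (A * (u - t0)))). exact Hexp.
Qed.

Lemma growth_cont M A t0 a b : cont_on_Icc (growth M A t0) a b.
Proof.
  apply cont_on_Icc_of_continuity. intros t. apply derivable_continuous_pt.
  exists (A * growth M A t0 t). apply growth_deriv.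
Qed.

Lemma growth_init M A t0 : growth M A t0 t0 = M.
Proof. unfold growth. rewrite Rminus_diag, Rmult_0_r, exp_0. ring. Qed.

Lemma growth_pos M A t0 u : 0 < M -> 0 < growth M A t0 u.
Proof. intros HM. unfold growth. apply Rmult_lt_0_compat; [exact HM | apply exp_pos]. Qed.

Lemma growth_mono M A t0 u v : 0 < M -> 0 <= A -> u <= v -> growth M A t0 u <= growth M A t0 v.
Proof.
  intros HM HA Huv. unfold growth. apply Rmult_le_compat_l; [lra|].
  destruct (Req_dec (A * (u - t0)) (A * (v - t0))) as [->|]; [lra|].
  left. apply exp_increasing. assert (A * (u - t0) <= A * (v - t0)) by nra. lra.
Qed.

Lemma growth_ge_init M A t0 u : 0 < M -> 0 <= A -> t0 <= u -> M <= growth M A t0 u.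
Proof.
  intros HM HA Hu. rewrite <- (growth_init M A t0) at 1. apply growth_mono; assumption.
Qed.

Lemma affine_deriv L a e v : derivable_pt_lim (fun u => L * (u - a) + e) v L.
Proof.
  assert (Hid : derivable_pt_lim (fun u => u - a) v (1 - 0)).
  { apply (derivable_pt_lim_minus id (fct_cte a));
      [apply derivable_pt_lim_id | apply derivable_pt_lim_const]. }
  assert (H := derivable_pt_lim_plus _ (fct_cte e) v _ _
                 (derivable_pt_lim_scal _ L v _ Hid) (derivable_pt_lim_const e v)).
  rewrite Rminus_0_r, Rmult_1_r, Rplus_0_r in H. exact H.
Qed.

Lemma family_bounded (f : nat -> nat -> R -> R) n r a b : a <= b ->
  (forall i c t, (i < n)%nat -> (c < r)%nat -> a <= t <= b -> continuity_pt (f i c) t) ->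
  exists P, forall i c t, (i < n)%nat -> (c < r)%nat -> a <= t <= b -> Rabs (f i c t) <= P.
Proof.
  intros Hab Hcont.
  destruct (fin_upper2 n r (fun i c P => forall t, a <= t <= b -> Rabs (f i c t) <= P))
    as [P HP].
  - intros i c x y Hxy H t Ht. specialize (H t Ht). lra.
  - intros i c Hi Hc. destruct (continuity_ab_maj (fun t => Rabs (f i c t)) a b Hab) as [t1 [Ht1 _]].
    + intros t Ht. apply (continuity_pt_comp (f i c) Rabs); [auto | apply Rcontinuity_abs].
    + exists (Rabs (f i c t1)). exact Ht1.
  - exists P. intros i c t Hi Hc Ht. apply HP; assumption.
Qed.

Section ClosedLoop.

Variables (n r l : nat) (src dst : nat -> nat) (phi dphi : nat -> nat -> R -> R)
  (gamma : R) (alpha beta delta theta : nat -> R) (t0 T0 : R)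
  (z kh : nat -> nat -> R -> R) (eta : nat -> R -> R)
  (tau : nat -> nat -> R) (xh : nat -> nat -> R -> R).

Local Notation state i c t := (z i c t + phi i c t).
Local Notation w := (input_w n l src dst kh xh).

(* The components of [closed_loop] that the argument uses, the triggering
   condition being written with [trigger_term]. *)
Hypothesis phi_deriv : forall i c t, (i < n)%nat -> (c < r)%nat ->
  derivable_pt_lim (phi i c) t (dphi i c t).
Hypothesis dphi_cont : forall i c, (i < n)%nat -> (c < r)%nat -> continuity (dphi i c).
Hypothesis gamma_pos : 0 < gamma.
Hypothesis z_cont : forall i c, (i < n)%nat -> (c < r)%nat -> cont_on_Ico (z i c) t0 T0.
Hypothesis kh_cont : forall j c, (j < l)%nat -> (c < r)%nat -> cont_on_Ico (kh j c) t0 T0.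
Hypothesis eta_cont : forall i, (i < n)%nat -> cont_on_Ico (eta i) t0 T0.
Hypothesis z_deriv : forall t, t0 < t < T0 -> ~ is_event_time n tau t ->
  forall i c, (i < n)%nat -> (c < r)%nat ->
  derivable_pt_lim (z i c) t (- gamma * z i c t - w t i c).
Hypothesis kh_deriv : forall t, t0 < t < T0 -> ~ is_event_time n tau t ->
  forall j c, (j < l)%nat -> (c < r)%nat ->
  derivable_pt_lim (kh j c) t (Rabs (BT_kron n src dst (fun i c' => xh i c' t) j c)).
Hypothesis eta_deriv : forall t, t0 < t < T0 -> ~ is_event_time n tau t ->
  forall i, (i < n)%nat ->
  derivable_pt_lim (eta i) t (- alpha i * eta i t - delta i *
    trigger_term (beta i) r (fun c => w t i c) (fun c => state i c t - xh i c t)).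
Hypothesis tau_init : forall i, (i < n)%nat -> tau i O = t0.
Hypothesis tau_incr : forall i k, (i < n)%nat -> tau i k < tau i (S k).
Hypothesis xh_hold : forall i k c t, (i < n)%nat -> (c < r)%nat ->
  tau i k <= t < tau i (S k) -> t < T0 -> xh i c t = state i c (tau i k).
Hypothesis trigger_below : forall i k t, (i < n)%nat -> tau i k < t < tau i (S k) -> t < T0 ->
  theta i * trigger_term (beta i) r (fun c => w t i c)
              (fun c => state i c t - state i c (tau i k)) < eta i t.
Hypothesis trigger_reached : forall i k, (i < n)%nat -> tau i (S k) < T0 ->
  forall e, 0 < e -> exists t, tau i (S k) - e < t < tau i (S k) /\
    theta i * trigger_term (beta i) r (fun c => w t i c)
                (fun c => state i c t - state i c (tau i k)) > eta i t - e.

Variable T : R.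
Hypothesis t0_lt_T : t0 < T.
Hypothesis T_le_T0 : T <= T0.
Hypothesis reach : events_reach n tau T.

Lemma tau_ge_t0 i k : (i < n)%nat -> t0 <= tau i k.
Proof. intros Hi. rewrite <- (tau_init i Hi). apply incr_le; [auto | lia]. Qed.

Lemma events_isolated a b : b <= T -> right_isolated (is_event_time n tau) a b.
Proof. apply (events_right_isolated n tau T a b tau_incr reach). Qed.

Lemma last_event j v : (j < n)%nat -> t0 <= v < T -> exists k, tau j k <= v < tau j (S k).
Proof.
  intros Hj Hv. destruct (reach j v Hj ltac:(lra)) as [K HK].
  apply (locate_in_incr (tau j) v K); [auto | rewrite tau_init by exact Hj; lra | exact HK].
Qed.

(** A priori bound: between events z and the gains grow at most exponentially,
    at the rate gamma + l + 2 n read off from their equations. *)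

Local Notation rate := (gamma + INR l + 2 * INR n).

Lemma rate_nonneg : 0 <= rate.
Proof. pose proof (pos_INR l). pose proof (pos_INR n). lra. Qed.

Definition dominated (M u : R) : Prop :=
  (forall i c, (i < n)%nat -> (c < r)%nat -> Rabs (z i c u) < growth M rate t0 u) /\
  (forall j c, (j < l)%nat -> (c < r)%nat -> Rabs (kh j c u) < growth M rate t0 u).

Section Growth.

Variables M P : R.
Hypothesis M_pos : 0 < M.
Hypothesis P_le_M : P <= M.
Hypothesis phi_le : forall i c t, (i < n)%nat -> (c < r)%nat -> t0 <= t < T -> Rabs (phi i c t) <= P.
Hypothesis z_init : forall i c, (i < n)%nat -> (c < r)%nat -> Rabs (z i c t0) < M.
Hypothesis kh_init : forall j c, (j < l)%nat -> (c < r)%nat -> Rabs (kh j c t0) < M.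

Local Notation G := (growth M rate t0).

(* The equations z' = -gamma z - w and |w| <= l max kh give the left step. *)
Lemma z_growth_step s : t0 < s < T -> (forall v, t0 <= v < s -> dominated M v) ->
  forall i c, (i < n)%nat -> (c < r)%nat -> Rabs (z i c s) < G s.
Proof.
  intros Hs IH i c Hi Hc.
  apply (abs_comparison (z i c) (fun u => - gamma * z i c u - w u i c) G (fun u => rate * G u)
           t0 s (is_event_time n tau)); [lra | | apply growth_cont | | | ].
  - apply (cont_on_Icc_of_Ico _ t0 T0); [auto | lra | lra].
  - apply events_isolated; lra.
  - intros v Hv Hnv. split; [apply z_deriv; auto; lra|]. split; [apply growth_deriv|].
    destruct (IH v ltac:(lra)) as [Hz Hk].
    assert (Hw := input_w_bound n l src dst kh xh v i c (G v) ltac:(intros; left; apply Hk; auto)).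
    specialize (Hz i c Hi Hc). pose proof (growth_pos M rate t0 v M_pos).
    pose proof (pos_INR n).
    eapply Rle_trans; [apply Rabs_triang|].
    rewrite Rabs_Ropp, Rabs_mult, Rabs_Ropp, (Rabs_right gamma) by lra. nra.
  - rewrite growth_init. auto.
Qed.

(* kh' = |(B^T (x) I_r) xh| with xh a past sample of x = z + phi. *)
Lemma kh_growth_step s : t0 < s < T -> (forall v, t0 <= v < s -> dominated M v) ->
  forall j c, (j < l)%nat -> (c < r)%nat -> Rabs (kh j c s) < G s.
Proof.
  intros Hs IH j c Hj Hc.
  apply (abs_comparison (kh j c) (fun u => Rabs (BT_kron n src dst (fun i c' => xh i c' u) j c))
           G (fun u => rate * G u) t0 s (is_event_time n tau)); [lra | | apply growth_cont | | | ].
  - apply (cont_on_Icc_of_Ico _ t0 T0); [auto | lra | lra].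
  - apply events_isolated; lra.
  - intros v Hv Hnv. split; [apply kh_deriv; auto; lra|]. split; [apply growth_deriv|].
    rewrite Rabs_Rabsolu.
    (* broadcast states are past samples of the state, hence bounded by G v + P *)
    assert (Hb : Rabs (BT_kron n src dst (fun i c' => xh i c' v) j c) <= INR n * (G v + P)).
    { apply BT_kron_bound. intros i Hi.
      destruct (last_event i v Hi ltac:(lra)) as [k Hk].
      rewrite (xh_hold i k c v Hi Hc Hk ltac:(lra)).
      pose proof (tau_ge_t0 i k Hi).
      destruct (IH (tau i k) ltac:(lra)) as [Hz _]. specialize (Hz i c Hi Hc).
      assert (G (tau i k) <= G v) by (apply growth_mono; [exact M_pos | apply rate_nonneg | lra]).
      assert (Rabs (phi i c (tau i k)) <= P) by (apply phi_le; auto; lra).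
      eapply Rle_trans; [apply Rabs_triang | lra]. }
    assert (M <= G v) by (apply growth_ge_init; [exact M_pos | apply rate_nonneg | lra]).
    pose proof (pos_INR n). pose proof (pos_INR l). pose proof (growth_pos M rate t0 v M_pos).
    assert (INR n * (G v + P) <= INR n * (2 * G v)) by (apply Rmult_le_compat_l; lra). nra.
  - rewrite growth_init. auto.
Qed.

Lemma dominated_persists s b : t0 <= s <= b -> b < T0 -> dominated M s ->
  exists d, 0 < d /\ forall v, t0 <= v <= b -> Rabs (v - s) < d -> dominated M v.
Proof.
  intros Hs Hb [Hz Hk].
  destruct (fin_lower2 n r (fun i c d => forall v, t0 <= v <= b -> Rabs (v - s) < d ->
              Rabs (z i c v) < G v)) as [d1 [Hd1 H1]].
  { intros i c x y Hxy H v Hv Hvs. apply H; [exact Hv | lra]. }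
  { intros i c Hi Hc. apply abs_lt_persists; [| apply growth_cont | exact Hs | auto].
    apply (cont_on_Icc_of_Ico _ t0 T0); [auto | lra | lra]. }
  destruct (fin_lower2 l r (fun j c d => forall v, t0 <= v <= b -> Rabs (v - s) < d ->
              Rabs (kh j c v) < G v)) as [d2 [Hd2 H2]].
  { intros j c x y Hxy H v Hv Hvs. apply H; [exact Hv | lra]. }
  { intros j c Hj Hc. apply abs_lt_persists; [| apply growth_cont | exact Hs | auto].
    apply (cont_on_Icc_of_Ico _ t0 T0); [auto | lra | lra]. }
  exists (Rmin d1 d2). split; [apply Rmin_pos; assumption|].
  intros v Hv Hvs. pose proof (Rmin_l d1 d2). pose proof (Rmin_r d1 d2).
  split; intros; [apply H1 | apply H2]; auto; lra.
Qed.

Lemma state_growth u : t0 <= u < T -> dominated M u.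
Proof.
  intros Hu. apply (real_ind t0 u (dominated M)); [lra | | | | lra].
  - split; intros; rewrite growth_init; auto.
  - intros s Hs IH. split; [apply z_growth_step | apply kh_growth_step]; auto; lra.
  - intros s Hs IH. destruct (dominated_persists s u ltac:(lra) ltac:(lra) (IH s ltac:(lra)))
      as [d [Hd Hpers]].
    exists d. split; [exact Hd|]. intros v Hv Hvu. apply Hpers; [lra | rewrite Rabs_right; lra].
Qed.

End Growth.

Lemma phi_cont i c t : (i < n)%nat -> (c < r)%nat -> continuity_pt (phi i c) t.
Proof. intros Hi Hc. apply derivable_continuous_pt. exists (dphi i c t). apply phi_deriv; assumption. Qed.

Lemma state_bounded : exists B, forall u, t0 <= u < T ->
  (forall i c, (i < n)%nat -> (c < r)%nat -> Rabs (z i c u) <= B) /\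
  (forall j c, (j < l)%nat -> (c < r)%nat -> Rabs (kh j c u) <= B).
Proof.
  destruct (family_bounded phi n r t0 T ltac:(lra)) as [P HP];
    [intros; apply phi_cont; assumption|].
  destruct (fin_upper2 n r (fun i c M => Rabs (z i c t0) < M)) as [Mz HMz];
    [intros; lra | intros i c _ _; exists (Rabs (z i c t0) + 1); lra|].
  destruct (fin_upper2 l r (fun j c M => Rabs (kh j c t0) < M)) as [Mk HMk];
    [intros; lra | intros j c _ _; exists (Rabs (kh j c t0) + 1); lra|].
  set (M := Rmax (Rmax Mz Mk) (Rabs P + 1)).
  assert (Mz <= M) by (eapply Rle_trans; [apply Rmax_l | apply Rmax_l]).
  assert (Mk <= M) by (eapply Rle_trans; [apply Rmax_r | apply Rmax_l]).
  assert (Rabs P + 1 <= M) by apply Rmax_r.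
  pose proof (Rle_abs P). pose proof (Rabs_pos P).
  exists (growth M rate t0 T). intros u Hu.
  destruct (state_growth M P ltac:(lra) ltac:(lra)) with u as [Hz Hk];
    [intros; apply HP; auto; lra | intros i c Hi Hc; specialize (HMz i c Hi Hc); lra
    | intros j c Hj Hc; specialize (HMk j c Hj Hc); lra | exact Hu |].
  assert (HuT : growth M rate t0 u <= growth M rate t0 T)
    by (apply growth_mono; [lra | apply rate_nonneg | lra]).
  split; [intros i c Hi Hc; specialize (Hz i c Hi Hc) | intros j c Hj Hc; specialize (Hk j c Hj Hc)];
    lra.
Qed.

Lemma state_lipschitz : exists L, 0 <= L /\ forall i c a t, (i < n)%nat -> (c < r)%nat ->
  t0 <= a <= t -> t < T -> Rabs (state i c t - state i c a) <= L * (t - a).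
Proof.
  destruct state_bounded as [B HB].
  destruct (family_bounded dphi n r t0 T ltac:(lra)) as [D HD];
    [intros; apply dphi_cont; assumption|].
  set (L := gamma * Rabs B + INR l * Rabs B + Rabs D).
  assert (HL : 0 <= L).
  { pose proof (Rabs_pos B). pose proof (Rabs_pos D). pose proof (pos_INR l). unfold L. nra. }
  exists L. split; [exact HL|]. intros i c a t Hi Hc Ha Ht.
  (* compare with L (u - a) + eps for every eps > 0 *)
  apply Rnot_lt_le. intros Hlt.
  set (eps := Rabs (state i c t - state i c a) - L * (t - a)).
  assert (Rabs (state i c t - state i c a) < L * (t - a) + eps); [|unfold eps in *; lra].
  apply (abs_comparison (fun u => state i c u - state i c a)
           (fun u => - gamma * z i c u - w u i c + dphi i c u)
           (fun u => L * (u - a) + eps) (fun _ => L) a t (is_event_time n tau)); [lra | | | | |].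
  - apply cont_on_Icc_minus; [apply cont_on_Icc_plus|].
    + apply (cont_on_Icc_of_Ico _ t0 T0); [auto | lra | lra].
    + apply cont_on_Icc_of_continuity. intros; apply phi_cont; assumption.
    + apply cont_on_Icc_of_continuity. intros; apply continuity_pt_const. intros ? ?; reflexivity.
  - apply cont_on_Icc_of_continuity. intros u. apply derivable_continuous_pt.
    exists L. apply affine_deriv.
  - apply events_isolated; lra.
  - intros v Hv Hnv. split; [|split; [apply affine_deriv|]].
    + replace (- gamma * z i c v - w v i c + dphi i c v)
        with ((- gamma * z i c v - w v i c + dphi i c v) - 0) by ring.
      apply (derivable_pt_lim_minus (fun u => state i c u) (fct_cte (state i c a)));
        [|apply derivable_pt_lim_const].
      apply (derivable_pt_lim_plus (z i c) (phi i c)); [apply z_deriv | apply phi_deriv]; auto; lra.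
    + destruct (HB v ltac:(lra)) as [Hz Hk]. specialize (Hz i c Hi Hc).
      assert (Hw := input_w_bound n l src dst kh xh v i c B ltac:(intros; apply Hk; auto)).
      assert (Rabs (dphi i c v) <= Rabs D) by (eapply Rle_trans; [apply HD; auto; lra | apply Rle_abs]).
      assert (gamma * Rabs (z i c v) <= gamma * Rabs B)
        by (apply Rmult_le_compat_l; [lra | eapply Rle_trans; [exact Hz | apply Rle_abs]]).
      assert (INR l * B <= INR l * Rabs B) by (apply Rmult_le_compat_l; [apply pos_INR | apply Rle_abs]).
      eapply Rle_trans; [apply Rabs_triang|].
      eapply Rle_trans; [apply Rplus_le_compat_r, Rabs_triang|].
      rewrite Rabs_Ropp, Rabs_mult, Rabs_Ropp, (Rabs_right gamma) by lra. unfold L. lra.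
  - cbv beta. rewrite !Rminus_diag, Rabs_R0. unfold eps. lra.
Qed.

(* The dynamic threshold eta_j stays bounded away from 0: between events the
   triggering rule gives eta_j' >= -(alpha_j + delta_j / theta_j) eta_j. *)
Lemma eta_floor j : (j < n)%nat -> 0 <= alpha j -> 0 <= delta j -> 0 < theta j ->
  0 < eta j t0 -> exists m, 0 < m /\ forall u, t0 <= u < T -> m <= eta j u.
Proof.
  intros Hj Ha Hd Hth He0.
  set (cc := alpha j + delta j / theta j).
  assert (Hcc : 0 <= cc) by (unfold cc; assert (0 <= delta j / theta j) by
                               (apply Rmult_le_pos; [lra | left; apply Rinv_0_lt_compat; lra]); lra).
  set (E := growth 1 cc t0).
  assert (HE : forall u, 0 < E u) by (intros; apply growth_pos; lra).
  assert (Hweighted : forall u, t0 <= u < T -> eta j t0 <= eta j u * E u).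
  { intros u Hu.
    set (Deta := fun v => - alpha j * eta j v - delta j *
           trigger_term (beta j) r (fun c => w v j c) (fun c => state j c v - xh j c v)).
    assert (- (eta j u * E u) <= - (eta j t0 * E t0)); [|unfold E in *; rewrite growth_init in *; lra].
    apply (nonincreasing_off (fun v => - (eta j v * E v))
             (fun v => - (Deta v * E v + eta j v * (cc * E v))) t0 u (is_event_time n tau));
      [lra | | apply events_isolated; lra |].
    - apply cont_on_Icc_opp, cont_on_Icc_mult; [|apply growth_cont].
      apply (cont_on_Icc_of_Ico _ t0 T0); [auto | lra | lra].
    - intros v Hv Hnv. split.
      + apply (derivable_pt_lim_opp (fun v => eta j v * E v)).
        apply (derivable_pt_lim_mult (eta j) E); [apply eta_deriv; auto; lra | apply growth_deriv].
      + destruct (last_event j v Hj ltac:(lra)) as [k Hk].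
        assert (Hkv : tau j k < v).
        { destruct (Rle_lt_or_eq_dec _ _ (proj1 Hk)) as [|Heq]; [assumption|].
          exfalso; apply Hnv. exists j, k; split; assumption. }
        assert (Htrig := trigger_below j k v Hj ltac:(lra) ltac:(lra)).
        assert (Hxh : trigger_term (beta j) r (fun c => w v j c) (fun c => state j c v - xh j c v) =
                      trigger_term (beta j) r (fun c => w v j c)
                        (fun c => state j c v - state j c (tau j k))).
        { unfold trigger_term. f_equal; [f_equal|]; apply fsum_ext; intros c Hc;
            rewrite (xh_hold j k c v) by (auto; lra); reflexivity. }
        unfold Deta. rewrite Hxh.
        set (Q := trigger_term (beta j) r (fun c => w v j c)
                    (fun c => state j c v - state j c (tau j k))) in *.
        assert (HQ : delta j * Q <= delta j * (eta j v / theta j)).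
        { apply Rmult_le_compat_l; [exact Hd|].
          apply Rmult_le_reg_l with (theta j); [exact Hth|]. field_simplify; lra. }
        assert (0 <= - alpha j * eta j v - delta j * Q + eta j v * cc).
        { unfold cc. replace (delta j * (eta j v / theta j)) with (eta j v * (delta j / theta j)) in HQ
            by (field; lra). lra. }
        pose proof (HE v). nra. }
  exists (eta j t0 / E T). split; [apply Rdiv_lt_0_compat; auto|].
  intros u Hu. specialize (Hweighted u Hu).
  assert (E u <= E T) by (apply growth_mono; lra).
  assert (0 <= eta j u).
  { apply Rnot_lt_le. intros Hneg. pose proof (HE u). nra. }
  apply Rmult_le_reg_r with (E T); [apply HE|]. unfold Rdiv. rewrite Rmult_assoc, Rinv_l, Rmult_1_r
    by (apply Rgt_not_eq, HE). pose proof (HE u). nra.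
Qed.

Lemma no_cluster_at_T j : (j < n)%nat -> 0 <= alpha j -> 0 <= delta j -> 0 < theta j ->
  0 < eta j t0 -> ~ approaches_below (tau j) T.
Proof.
  intros Hj Ha Hd Hth He0 [Hbelow Happroach].
  destruct (eta_floor j Hj Ha Hd Hth He0) as [m [Hm Hfloor]].
  destruct state_bounded as [B HB].
  destruct state_lipschitz as [L [HL HLip]].
  set (W := INR l * Rabs B).
  assert (HW : 0 <= W) by (unfold W; pose proof (pos_INR l); pose proof (Rabs_pos B); nra).
  set (K := (Rabs (beta j) + W) * (INR r * L)).
  assert (HK : 0 <= K).
  { unfold K. pose proof (Rabs_pos (beta j)). pose proof (pos_INR r).
    apply Rmult_le_pos; [lra | apply Rmult_le_pos; lra]. }
  (* near T the triggering term is at most K times the elapsed time *)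
  set (ep := m / (2 * (theta j * K + 1))).
  assert (Hep : 0 < ep) by (unfold ep; apply Rdiv_lt_0_compat; nra).
  assert (HthK : theta j * K * ep < m / 2).
  { unfold ep. apply Rmult_lt_reg_r with (2 * (theta j * K + 1)); [nra|]. field_simplify; nra. }
  destruct (Happroach ep Hep) as [k Hk].
  pose proof (Hbelow (S k)). pose proof (tau_incr j k Hj). pose proof (tau_ge_t0 j k Hj).
  set (e := Rmin (tau j (S k) - tau j k) (m / 2)).
  assert (0 < e) by (apply Rmin_pos; lra).
  assert (e <= tau j (S k) - tau j k) by apply Rmin_l. assert (e <= m / 2) by apply Rmin_r.
  destruct (trigger_reached j k Hj ltac:(lra) e ltac:(lra)) as [t [Ht Hq]].
  assert (m <= eta j t) by (apply Hfloor; lra).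
  assert (Hterm : trigger_term (beta j) r (fun c => w t j c)
                    (fun c => state j c t - state j c (tau j k)) <= K * ep).
  { eapply Rle_trans; [apply (trigger_term_bound _ _ _ _ W (L * (t - tau j k))); [exact HW|]|].
    - intros c Hc. destruct (HB t ltac:(lra)) as [_ Hk']. split.
      + apply input_w_bound. intros j' Hj'. eapply Rle_trans; [apply Hk'; auto | apply Rle_abs].
      + apply HLip; auto; lra.
    - replace ((Rabs (beta j) + W) * (INR r * (L * (t - tau j k)))) with (K * (t - tau j k))
        by (unfold K; ring).
      apply Rmult_le_compat_l; [exact HK | lra]. }
  assert (theta j * trigger_term (beta j) r (fun c => w t j c)
            (fun c => state j c t - state j c (tau j k)) <= theta j * K * ep).
  { rewrite Rmult_assoc. apply Rmult_le_compat_l; lra. }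
  lra.
Qed.

End ClosedLoop.

Theorem theorem3
  (n r l : nat) (src dst : nat -> nat)
  (* (A1) connected undirected graph *)
  (Hgraph : undirected_graph n l src dst)
  (Hconn : connected n l src dst)
  (* continuously differentiable reference signals phi_i(t) in R^r *)
  (phi dphi : nat -> nat -> R -> R)
  (Hdphi : forall i c t, (i < n)%nat -> (c < r)%nat -> derivable_pt_lim (phi i c) t (dphi i c t))
  (Hdphic : forall i c, (i < n)%nat -> (c < r)%nat -> continuity (dphi i c))
  (t0 : R) (Ht0 : 0 <= t0)
  (* (A2) *)
  (varphi dvarphi : R)
  (HA2a : forall t j c, 0 <= t -> (j < l)%nat -> (c < r)%nat ->
      Rabs (BT_kron n src dst (fun i c' => phi i c' t) j c) <= varphi)
  (HA2b : forall t j c, 0 <= t -> (j < l)%nat -> (c < r)%nat ->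
      Rabs (BT_kron n src dst (fun i c' => dphi i c' t) j c) <= dvarphi)
  (* parameters *)
  (gamma : R) (Hgamma : 0 < gamma)
  (alpha beta delta theta : nat -> R)
  (Halpha : forall i, (i < n)%nat -> 0 < alpha i)
  (Hdelta : forall i, (i < n)%nat -> 1 <= delta i)
  (Htheta : forall i, (i < n)%nat -> 0 < theta i < 1)
  (* (A3), with X = (B^T B)^+ *)
  (X : mat)
  (HX : is_pinv l (mmul n (mtr (incid src dst)) (incid src dst)) X)
  (HA3 : forall i, (i < n)%nat ->
      (gamma * varphi + dvarphi) *
        mat_inf_norm (n * r) (l * r) (kronI r (mmul l (incid src dst) X)) <= beta i)
  (* any closed-loop trajectory on [t0, T0) *)
  (T0 : R)
  (z kh : nat -> nat -> R -> R) (eta : nat -> R -> R)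
  (tau : nat -> nat -> R) (xh : nat -> nat -> R -> R)
  (Hsol : closed_loop n r l src dst phi gamma alpha beta delta theta t0 T0 z kh eta tau xh) :
  forall i, (i < n)%nat -> ~ Un_cv (tau i) T0.
Proof.
  intros i Hi Hcv.
  unfold closed_loop in Hsol; cbv beta zeta in Hsol.
  destruct Hsol as (_ & _ & eta_pos & z_cont & kh_cont & eta_cont & deriv & tau_init & tau_incr
                    & xh_hold & trigger_below & trigger_reached).
  (* the events of some agent j cluster at the earliest cluster time T <= T0 *)
  destruct (earliest_cluster_time n tau T0 i Hi tau_incr Hcv) as [j [T [Hj [HT [Hacc Hreach]]]]].
  assert (Ht0T : t0 < T) by (rewrite <- (tau_init j Hj); apply (proj1 Hacc)).
  pose proof (Halpha j Hj). pose proof (Hdelta j Hj). pose proof (Htheta j Hj).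
  (* which is impossible, as the threshold eta_j stays away from 0 *)
  apply (no_cluster_at_T n r l src dst phi dphi gamma alpha beta delta theta t0 T0 z kh eta tau xh
           Hdphi Hdphic Hgamma z_cont kh_cont eta_cont
           (fun t Ht Hne => proj1 (deriv t Ht Hne))
           (fun t Ht Hne => proj1 (proj2 (deriv t Ht Hne)))
           (fun t Ht Hne => proj2 (proj2 (deriv t Ht Hne)))
           tau_init tau_incr xh_hold trigger_below trigger_reached T Ht0T HT Hreach j Hj);
    [lra | lra | lra | apply eta_pos; exact Hj | exact Hacc].
Qed.
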